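(* Let $G$ be a modified planar graph with $m$ edges and let $\mathcal{T}$ be a separator tree of $G$ of height $\eta=O(\log m)$ in which every node $H$ satisfies $|S(H)|\le c\lceil\sqrt{|E(H)|}\rceil$ for a fixed constant $c$. Let $\mathcal{H}$ be a set of $K$ nodes of $\mathcal{T}$. Then \[\sum_{H\in\mathcal{P}_{\mathcal{T}}(\mathcal{H})}\big(|\partial H|+|F_H|\big)\le\widetilde{O}(\sqrt{mK}).\]
   Context: A modified planar graph is a graph obtained from a planar graph by adding two new vertices $s,t$ and any number of edges incident to them (parallel edges allowed). Separator tree: a rooted binary tree $\mathcal{T}$ whose nodes are regions (edge-induced subgraphs) $H$ of $G$, each storing vertex sets $\partial H$, $S(H)$, $F_H$, defined top-down: the root is $G$ with $\partial G=\emptyset$, $F_G=S(G)$; a non-leaf node $H$ has two children $D_1,D_2$ whose edge sets partition $E(H)$, with $V(D_1)\cap V(D_2)=S(H)$, $\partial D_j=(\partial H\cup S(H))\cap V(D_j)$, and $F_H=S(H)\setminus\partial H$; a node with constantly many edges is a leaf with $S(H)=\emptyset$ and $F_H=V(H)\setminus\partial H$. For a set $\mathcal{H}$ of nodes, $\mathcal{P}_{\mathcal{T}}(\mathcal{H})$ is the set of all nodes lying on a tree path from some $H\in\mathcal{H}$ to the root (including $H$ and the root). $\widetilde{O}$ hides polylogarithmic factors in $m$. *)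

From HB Require Import structures.
From mathcomp Require Import all_boot all_order all_algebra.
From mathcomp Require Import all_classical all_reals all_analysis.
From mathcomp Require Import Rstruct Rstruct_topology.
Set Implicit Arguments. Unset Strict Implicit. Unset Printing Implicit Defensive.
Import Order.TTheory GRing.Theory Num.Theory.

(* Graphs.  A finite undirected multigraph (parallel edges and loops allowed)
   with vertex type V and edge type E; edge e joins e1 e and e2 e.           *)

Section Graphs.
Variables (V E : finType) (e1 e2 : E -> V).

Definition planar_sub (VA : {set V}) (EA : {set E}) : Prop :=
  exists (pos : V -> (Rdefinitions.R * Rdefinitions.R)%type)
         (arc : E -> Rdefinitions.R -> (Rdefinitions.R * Rdefinitions.R)%type),
    {in VA &, injective pos} /\
    (forall e, e \in EA ->
       [/\ {within [set x : Rdefinitions.R | (0 <= x <= 1)%R], continuous (arc e)}%classic,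
           arc e 0%R = pos (e1 e),
           arc e 1%R = pos (e2 e),
           {in `]0%R, 1%R[%R &, injective (arc e)} &
           forall x v, x \in `]0%R, 1%R[%R -> v \in VA -> arc e x <> pos v]) /\
    (forall e f, e \in EA -> f \in EA -> e != f ->
       forall x y, x \in `]0%R, 1%R[%R -> y \in `]0%R, 1%R[%R -> arc e x <> arc f y).

Definition modified_planar : Prop :=
  exists s t : V, s != t /\
    planar_sub (~: [set s; t])
      [set e | [&& e1 e != s, e1 e != t, e2 e != s & e2 e != t]].

Definition Vof (A : {set E}) : {set V} :=
  [set v | [exists e in A, (e1 e == v) || (e2 e == v)]].

End Graphs.

Lemma ex_sq (n : nat) : exists r, n <= r * r.
Proof. exists n; case: n => // n; exact: leq_pmulr. Qed.
Definition ceil_sqrt (n : nat) : nat := ex_minn (ex_sq n).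

(* A node stores its region H (edge set) and, if it is not
   a leaf, its separator S(H) and two children.          *)

Inductive stree (V E : finType) :=
| SLeaf of {set E}
| SNode of {set E} & {set V} & stree V E & stree V E.
Arguments SLeaf {V E}.
Arguments SNode {V E}.

Section Trees.
Variables (V E : finType) (e1 e2 : E -> V).

Definition region (t : stree V E) : {set E} :=
  match t with SLeaf H => H | SNode H _ _ _ => H end.

Definition sep (t : stree V E) : {set V} :=
  match t with SLeaf _ => finset.set0 | SNode _ Sp _ _ => Sp end.

Fixpoint height (t : stree V E) : nat :=
  match t with SLeaf _ => 0 | SNode _ _ l r => (maxn (height l) (height r)).+1 end.

Fixpoint sep_tree_wf (lam : nat) (t : stree V E) : Prop :=
  match t with
  | SLeaf H => #|H| <= lam
  | SNode H Sp l r =>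
      [/\ lam < #|H|,
          region l :|: region r = H,
          [disjoint region l & region r],
          Vof e1 e2 (region l) :&: Vof e1 e2 (region r) = Sp &
          sep_tree_wf lam l /\ sep_tree_wf lam r]
  end.

Definition sep_tree (lam : nat) (t : stree V E) : Prop :=
  region t = [set: E] /\ sep_tree_wf lam t.

Fixpoint sep_bounded (c : nat) (t : stree V E) : Prop :=
  match t with
  | SLeaf _ => True
  | SNode H Sp l r => #|Sp| <= c * ceil_sqrt #|H| /\ sep_bounded c l /\ sep_bounded c r
  end.

(* Nodes are addressed by their path from the root (false = first child,
   true = second child). *)
Fixpoint subtree (t : stree V E) (p : seq bool) : option (stree V E) :=
  match p, t with
  | [::], _ => Some t
  | b :: p', SNode _ _ l r => subtree (if b then r else l) p'
  | _ :: _, SLeaf _ => None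
  end.

Definition valid_addr (t : stree V E) (p : seq bool) : bool :=
  if subtree t p is Some _ then true else false.

Fixpoint bnd_from (B : {set V}) (t : stree V E) (p : seq bool) : {set V} :=
  match p, t with
  | [::], _ => B
  | b :: p', SNode _ Sp l r =>
      let D := if b then r else l in
      bnd_from ((B :|: Sp) :&: Vof e1 e2 (region D)) D p'
  | _ :: _, SLeaf _ => finset.set0
  end.

Definition bnd (t : stree V E) (p : seq bool) : {set V} := bnd_from finset.set0 t p.

Definition Fset (t : stree V E) (p : seq bool) : {set V} :=
  match subtree t p with
  | Some (SNode _ Sp _ _) => Sp :\: bnd t p
  | Some (SLeaf H) => Vof e1 e2 H :\: bnd t p
  | None => finset.set0
  end.

Definition node_cost (t : stree V E) (p : seq bool) : nat :=
  #|bnd t p| + #|Fset t p|.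

End Trees.

(* P_T(Hs): all nodes on a path from some node of Hs to the root, i.e. all
   prefixes of the addresses in Hs, each listed once. *)
Definition prefixes (p : seq bool) : seq (seq bool) :=
  [seq take i p | i <- iota 0 (size p).+1].
Definition path_closure (Hs : seq (seq bool)) : seq (seq bool) :=
  undup (flatten (map prefixes Hs)).

(* Recursing on the tree, P_T(Hs) splits into its root and, inside each child, the
   path closure of the addresses entering that child.  Since V(D_1) ∩ V(D_2) = S(H),
   |∂D_1| + |∂D_2| <= |∂H| + 2|S(H)|, so the boundaries cost at most (height + 1) · 2σ,
   where σ is the total size of the separators in P_T(Hs); the sets F_H add σ and the
   vertices of the leaves of P_T(Hs), of which there are at most min(2m, 2 lam K).
   As |S(H)|^2 <= 4c^2 |E(H)| and sibling regions are disjoint, Cauchy–Schwarz gives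
   σ^2 <= 4c^2 (height + 1)^2 K m.  Planarity only guarantees that such separator
   trees exist; the bound holds for every graph. *)

From mathcomp Require Import all_boot all_order all_algebra.
From mathcomp Require Import zify.
Set Implicit Arguments. Unset Strict Implicit. Unset Printing Implicit Defensive.

Lemma leq_sqrD_mulD D a b x1 y1 x2 y2 :
  a ^ 2 <= D * x1 * y1 -> b ^ 2 <= D * x2 * y2 ->
  (a + b) ^ 2 <= D * (x1 + x2) * (y1 + y2).
Proof.
move=> ha hb.
have cross : (2 * (a * b)) ^ 2 <= (D * x1 * y2 + D * x2 * y1) ^ 2.
  apply: leq_trans (leq_of_leqif (nat_AGM2 _ _)).
  have := leq_mul ha hb; lia.
rewrite leq_sqr in cross; rewrite sqrnD; lia.
Qed.

Lemma leq_sqrD_scale h Z x y :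
  x ^ 2 <= Z -> y ^ 2 <= h ^ 2 * Z -> (x + y) ^ 2 <= h.+1 ^ 2 * Z.
Proof.
move=> hx hy.
have cross : (x * y) ^ 2 <= (h * Z) ^ 2 by have := leq_mul hx hy; lia.
rewrite leq_sqr in cross; rewrite sqrnD; lia.
Qed.

Lemma leq_sqrD2 u v : (u + v) ^ 2 <= 2 * (u ^ 2 + v ^ 2).
Proof. have := leq_of_leqif (nat_Cauchy u v); rewrite sqrnD; lia. Qed.

Lemma ceil_sqrt_sq_le n : ceil_sqrt n ^ 2 <= 4 * n.
Proof.
rewrite /ceil_sqrt; case: ex_minnP => [[|r]] // le_n_sq min_r.
have lt_sq_n : r * r < n by rewrite ltnNge; apply/negP => /min_r; rewrite ltnn.
nia.
Qed.

Lemma card_Vof_le (V E : finType) (e1 e2 : E -> V) (A : {set E}) :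
  #|Vof e1 e2 A| <= 2 * #|A|.
Proof.
have sub : Vof e1 e2 A \subset (e1 @: A) :|: (e2 @: A).
  apply/subsetP => v; rewrite inE => /existsP[e /andP[eA /orP[]/eqP <-]];
    rewrite inE; apply/orP; [left | right]; exact: imset_f.
have := leq_of_leqif (leq_card_setU (e1 @: A) (e2 @: A)).
have := leq_imset_card e1 A; have := leq_imset_card e2 A.
have := subset_leq_card sub; lia.
Qed.

Lemma cardsU_disjoint (T : finType) (A B : {set T}) :
  [disjoint A & B] -> #|A :|: B| = #|A| + #|B|.
Proof. by move/disjoint_setI0 => AB0; rewrite -cardsUI AB0 cards0 addn0. Qed.

Lemma card_sepU_split (T : finType) (B S X Y : {set T}) :
  X :&: Y \subset S ->
  #|(B :|: S) :&: X| + #|(B :|: S) :&: Y| <= #|B| + 2 * #|S|.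
Proof.
move=> XYS; rewrite -cardsUI.
have sub_U : (B :|: S) :&: X :|: (B :|: S) :&: Y \subset B :|: S.
  by rewrite -setIUr subsetIl.
have sub_I : ((B :|: S) :&: X) :&: ((B :|: S) :&: Y) \subset S.
  apply: subset_trans XYS; apply/subsetP => v; rewrite !inE.
  by case/andP => /andP[_ ->] /andP[_ ->].
have := subset_leq_card sub_U; have := subset_leq_card sub_I.
have := leq_of_leqif (leq_card_setU B S); lia.
Qed.

(* The addresses of Hs inside the [b]-child, relative to it; the default [~~ b] of
   [head] excludes the root address [::]. *)
Definition branch (b : bool) (Hs : seq (seq bool)) : seq (seq bool) :=
  [seq behead p | p <- Hs & head (~~ b) p == b].

Lemma size_branch Hs : size (branch false Hs) + size (branch true Hs) <= size Hs.
Proof.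
rewrite !size_map !size_filter; elim: Hs => //= p Hs IH.
by case: p => [|[]] /=; lia.
Qed.

Lemma has_prefix_cons b q Hs :
  has (prefix (b :: q)) Hs = has (prefix q) (branch b Hs).
Proof.
elim: Hs => //= p Hs ->; rewrite /branch /=.
by case: p => [|b' p] /=; case: b; rewrite ?prefix_cons //; case: b'.
Qed.

Lemma mem_path_closure q Hs : (q \in path_closure Hs) = has (prefix q) Hs.
Proof.
rewrite mem_undup; apply/flatten_mapP/hasP => -[p pHs qp]; exists p => //;
  move: qp; rewrite /prefixes prefixE.
- case/mapP => i; rewrite mem_iota ltnS => /andP[_ le_ip] ->.
  by rewrite size_takel.
- move/eqP => take_q; apply/mapP; exists (size q) => //.
  by rewrite mem_iota ltnS -take_q size_take_min geq_minr.
Qed.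

Lemma perm_path_closure Hs :
  perm_eq (path_closure Hs)
    ((if Hs is [::] then [::] else [:: [::]]) ++
     map (cons false) (path_closure (branch false Hs)) ++
     map (cons true) (path_closure (branch true Hs))).
Proof.
have cons_inj (b : bool) : injective (cons b) by move=> ? ? [].
have notin_cons (b b' : bool) q X : b != b' -> (b :: q \in map (cons b') X) = false.
  by move=> neq; apply/mapP => -[? _ [eq_b _]]; rewrite eq_b eqxx in neq.
apply: uniq_perm; first exact: undup_uniq.
- rewrite !cat_uniq !(map_inj_uniq (cons_inj _)) !undup_uniq /= andbT.
  apply/and3P; split; first by case: Hs.
  + by apply/hasPn => _ /[!mem_cat] /orP[] /mapP[? _ ->]; case: Hs.
  + by apply/hasPn => _ /mapP[? _ ->]; rewrite notin_cons.
move=> [|b q]; rewrite mem_path_closure !mem_cat.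
- by case: Hs => [|p Hs]; rewrite /= ?inE ?in_nil ?prefix0s.
- rewrite has_prefix_cons; have -> : (b :: q \in if Hs is [::] then [::] else [:: [::]]) = false.
    by case: Hs.
  by case: b; rewrite ?(mem_map (cons_inj _)) ?notin_cons ?orbF -?mem_path_closure.
Qed.

Lemma big_path_closure (f : seq bool -> nat) Hs :
  \sum_(p <- path_closure Hs) f p =
  (if Hs is [::] then 0 else f [::]) +
  \sum_(p <- path_closure (branch false Hs)) f (false :: p) +
  \sum_(p <- path_closure (branch true Hs)) f (true :: p).
Proof.
rewrite (perm_big _ (perm_path_closure Hs)) !big_cat !big_map /= addnA.
by case: Hs => [|p Hs]; rewrite ?big_nil ?big_seq1.
Qed.

Section SeparatorTree.
Variables (V E : finType) (e1 e2 : E -> V).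
Local Notation Vof := (Vof e1 e2).
Local Notation bnd_from := (bnd_from e1 e2).

Definition Fset_from (B : {set V}) (t : stree V E) (p : seq bool) : {set V} :=
  match subtree t p with
  | Some (SNode _ Sp _ _) => Sp :\: bnd_from B t p
  | Some (SLeaf H) => Vof H :\: bnd_from B t p
  | None => set0
  end.

Definition node_cost_from (B : {set V}) (t : stree V E) (p : seq bool) : nat :=
  #|bnd_from B t p| + #|Fset_from B t p|.

Lemma node_cost_fromE (t : stree V E) p : node_cost e1 e2 t p = node_cost_from set0 t p.
Proof. by []. Qed.

(* [sep_mass t Hs] is the sum of |S(H)| over the internal nodes of P_T(Hs), and
   [leaf_mass t Hs] the sum of |V(H)| over its leaves. *)
Fixpoint sep_mass (t : stree V E) (Hs : seq (seq bool)) : nat :=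
  if Hs is [::] then 0 else
  match t with
  | SLeaf _ => 0
  | SNode _ Sp l r => #|Sp| + sep_mass l (branch false Hs) + sep_mass r (branch true Hs)
  end.

Fixpoint leaf_mass (t : stree V E) (Hs : seq (seq bool)) : nat :=
  if Hs is [::] then 0 else
  match t with
  | SLeaf H => #|Vof H|
  | SNode _ _ l r => leaf_mass l (branch false Hs) + leaf_mass r (branch true Hs)
  end.

Lemma sum_node_cost_from_leaf B H Hs :
  \sum_(p <- path_closure Hs) node_cost_from B (SLeaf H) p =
  if Hs is [::] then 0 else #|B| + #|Vof H :\: B|.
Proof.
have cost_below b p : node_cost_from B (SLeaf H) (b :: p) = 0.
  by rewrite /node_cost_from /Fset_from /= cards0.
by rewrite big_path_closure !big1 ?addn0 => [|p _|p _]; rewrite ?cost_below //; case: Hs.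
Qed.

Lemma sum_node_cost_from_node B H Sp l r Hs :
  \sum_(p <- path_closure Hs) node_cost_from B (SNode H Sp l r) p =
  (if Hs is [::] then 0 else #|B| + #|Sp :\: B|) +
  \sum_(p <- path_closure (branch false Hs))
     node_cost_from ((B :|: Sp) :&: Vof (region l)) l p +
  \sum_(p <- path_closure (branch true Hs))
     node_cost_from ((B :|: Sp) :&: Vof (region r)) r p.
Proof. by rewrite big_path_closure; case: Hs. Qed.

Lemma sum_node_cost_from_le lam t : sep_tree_wf e1 e2 lam t -> forall B Hs,
  \sum_(p <- path_closure Hs) node_cost_from B t p <=
  (height t).+1 * (#|B| + 2 * sep_mass t Hs) + sep_mass t Hs + leaf_mass t Hs.
Proof.
elim: t => [H | H Sp l IHl r IHr] /= wf B Hs.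
  rewrite sum_node_cost_from_leaf; case: Hs => [|p Hs] //=.
  have := subset_leq_card (subsetDl (Vof H) B); lia.
case: wf => _ _ _ sepE [wl wr].
rewrite sum_node_cost_from_node; case: Hs => [|p Hs]; first by rewrite !big_nil.
set Bl := (B :|: Sp) :&: _; set Br := (B :|: Sp) :&: _.
set sl := sep_mass l _; set sr := sep_mass r _.
set h := (maxn (height l) (height r)).+1.
have sepS : Vof (region l) :&: Vof (region r) \subset Sp by rewrite sepE.
have children_bnd : h * (#|Bl| + 2 * sl) + h * (#|Br| + 2 * sr) <=
                    h * (#|B| + 2 * (#|Sp| + sl + sr)).
  rewrite -mulnDr leq_mul2l; apply/orP; right.
  by have := card_sepU_split B sepS; rewrite -/Bl -/Br; lia.
have le_hl : (height l).+1 <= h by rewrite ltnS leq_maxl.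
have le_hr : (height r).+1 <= h by rewrite ltnS leq_maxr.
have := leq_mul le_hl (leqnn (#|Bl| + 2 * sl)).
have := leq_mul le_hr (leqnn (#|Br| + 2 * sr)).
have := IHl wl Bl (branch false (p :: Hs)); have := IHr wr Br (branch true (p :: Hs)).
have := subset_leq_card (subsetDl Sp B); lia.
Qed.

Lemma sep_mass_sq_le c lam t : sep_tree_wf e1 e2 lam t -> sep_bounded c t -> forall Hs,
  sep_mass t Hs ^ 2 <= (height t).+1 ^ 2 * (4 * c ^ 2) * size Hs * #|region t|.
Proof.
elim: t => [H | H Sp l IHl r IHr] /= wf sb [|p Hs] //.
case: wf => _ HU Hdisj _ [wl wr]; case: sb => sepH [sbl sbr].
set h := maxn (height l) (height r); set K := size (p :: Hs).
set Hl := branch false (p :: Hs); set Hr := branch true (p :: Hs).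
have sep_sq : #|Sp| ^ 2 <= 4 * c ^ 2 * K * #|H|.
  rewrite -(leq_sqr _ (c * _)) expnMn in sepH; apply: leq_trans sepH _.
  have := leq_mul (leqnn (c ^ 2)) (ceil_sqrt_sq_le #|H|).
  have K_gt0 : 0 < K by [].
  have := leq_pmulr (4 * c ^ 2 * #|H|) K_gt0; lia.
have children_sq : (sep_mass l Hl + sep_mass r Hr) ^ 2 <=
    h.+1 ^ 2 * (4 * c ^ 2) * (size Hl + size Hr) * (#|region l| + #|region r|).
  apply: leq_sqrD_mulD.
  - apply: leq_trans (IHl wl sbl _) _; do 3 apply: leq_mul => //.
    by rewrite leq_sqr ltnS leq_maxl.
  - apply: leq_trans (IHr wr sbr _) _; do 3 apply: leq_mul => //.
    by rewrite leq_sqr ltnS leq_maxr.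
rewrite -cardsU_disjoint // HU in children_sq.
have children_le :
    (sep_mass l Hl + sep_mass r Hr) ^ 2 <= h.+1 ^ 2 * (4 * c ^ 2 * K * #|H|).
  apply: leq_trans children_sq _.
  have sizes := leq_mul (size_branch (p :: Hs)) (leqnn #|H|).
  have := leq_mul (leqnn (h.+1 ^ 2 * (4 * c ^ 2))) sizes; rewrite -/Hl -/Hr -/K; lia.
have := leq_sqrD_scale sep_sq children_le; rewrite -addnA; lia.
Qed.

Lemma leaf_mass_le_region lam t : sep_tree_wf e1 e2 lam t -> forall Hs,
  leaf_mass t Hs <= 2 * #|region t|.
Proof.
elim: t => [H | H Sp l IHl r IHr] /= wf [|p Hs] //; first exact: card_Vof_le.
case: wf => _ HU Hdisj _ [wl wr].
rewrite -HU cardsU_disjoint // mulnDr.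
exact: leq_add (IHl wl _) (IHr wr _).
Qed.

Lemma leaf_mass_le_size lam t : sep_tree_wf e1 e2 lam t -> forall Hs,
  leaf_mass t Hs <= 2 * lam * size Hs.
Proof.
elim: t => [H | H Sp l IHl r IHr] /= wf [|p Hs] //.
  apply: leq_trans (card_Vof_le e1 e2 H) (leq_trans _ (leq_pmulr _ (ltn0Sn (size Hs)))).
  by rewrite leq_mul2l wf orbT.
case: wf => _ _ _ _ [wl wr].
have := IHl wl (branch false (p :: Hs)); have := IHr wr (branch true (p :: Hs)).
have := leq_mul (leqnn (2 * lam)) (size_branch (p :: Hs)); lia.
Qed.

Lemma sum_node_cost_sq_le c lam t Hs :
  sep_tree e1 e2 lam t -> sep_bounded c t ->
  (\sum_(p <- path_closure Hs) node_cost e1 e2 t p) ^ 2 <=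
  8 * (c ^ 2 * (2 * height t + 3) ^ 2 * (height t).+1 ^ 2 + lam) * (#|E| * size Hs).
Proof.
move=> [root_t wf] sb.
rewrite (eq_bigr _ (fun p _ => node_cost_fromE t p)).
have := sum_node_cost_from_le wf set0 Hs; rewrite cards0.
have := sep_mass_sq_le wf sb Hs; have := leaf_mass_le_region wf Hs.
have := leaf_mass_le_size wf Hs; rewrite root_t cardsT.
set S := \sum_(_ <- _) _; set s := sep_mass t Hs; set f := leaf_mass t Hs.
set h := height t; set K := size Hs; set m := #|E|.
move=> f_lam f_m s_sq S_le.
have S_sq : S ^ 2 <= 2 * ((2 * h + 3) ^ 2 * s ^ 2 + f ^ 2).
  rewrite -expnMn; apply: leq_trans (leq_sqrD2 ((2 * h + 3) * s) f).
  by rewrite leq_sqr; lia.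
have f_sq : f ^ 2 <= 4 * lam * (m * K) by have := leq_mul f_m f_lam; lia.
apply: leq_trans S_sq _.
have := leq_mul (leqnn ((2 * h + 3) ^ 2)) s_sq; nia.
Qed.

End SeparatorTree.

Theorem mainTheorem5 :
  forall c lam a : nat, exists C k : nat,
  forall (V E : finType) (e1 e2 : E -> V) (t : stree V E) (Hs : seq (seq bool)),
    modified_planar e1 e2 ->
    sep_tree e1 e2 lam t ->
    sep_bounded c t ->
    height t <= a * (trunc_log 2 #|E|).+1 ->
    uniq Hs ->
    all (valid_addr t) Hs ->
    (\sum_(p <- path_closure Hs) node_cost e1 e2 t p) ^ 2
      <= C * (trunc_log 2 #|E|).+1 ^ k * (#|E| * size Hs).
Proof.
move=> c lam a.
exists (8 * (c ^ 2 * (2 * a + 3) ^ 2 * (a + 1) ^ 2 + lam)), 4.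
move=> V E e1 e2 t Hs _ tree_t sb height_t _ _.
apply: leq_trans (sum_node_cost_sq_le Hs tree_t sb) _.
apply: leq_mul => //; rewrite -[X in _ <= X]mulnA leq_pmul2l // mulnDl.
set L := (trunc_log 2 #|E|).+1 in height_t *; set h := height t in height_t *.
have L_gt0 : 0 < L by [].
apply: leq_add; last by rewrite leq_pmulr // expn_gt0 L_gt0.
have h3 : (2 * h + 3) ^ 2 <= (2 * a + 3) ^ 2 * L ^ 2 by rewrite -expnMn leq_sqr; nia.
have h1 : h.+1 ^ 2 <= (a + 1) ^ 2 * L ^ 2 by rewrite -expnMn leq_sqr; nia.
have := leq_mul (leqnn (c ^ 2)) (leq_mul h3 h1); lia.
Qed.
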